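(* Let $\Gamma$ be a finite group, $R$ a commutative ring with $\Gamma$-action, and $k\in\mathbb N$ with $\gcd(k,\mathrm{ord}(\Gamma))=1$. Then the $k$-th Adams operation $\psi^k$ on $K_0(R\#\Gamma)$ satisfies \[\psi^k([R\#\Gamma])=[R\#\Gamma]\quad\text{in }K_0(R\#\Gamma).\]
   Context: $R\#\Gamma$ is the twisted group ring ($R$-free on $\Gamma$, $(a\gamma)(b\delta)=a\gamma(b)\gamma\delta$); $K_0(R\#\Gamma)$ is the Grothendieck group of finitely generated projective $R\#\Gamma$-modules. Tensor products and exterior/symmetric powers are over $R$ with diagonal $\Gamma$-action. When $\gcd(k,\mathrm{ord}(\Gamma))$ is invertible in $R$, every module $\Lambda^{a_1}_R(M)\otimes_R\cdots\otimes_R\Lambda^{a_r}_R(M)$ with $a_1+\dots+a_r=k$ and $M$ f.g. projective over $R\#\Gamma$ is again f.g. projective over $R\#\Gamma$, and the $k$-th Adams operation is the additive map $\psi^k:K_0(R\#\Gamma)\to K_0(R\#\Gamma)$ determined by $\psi^k([M])=N_k([\Lambda^1M],\dots,[\Lambda^kM])$, where $N_k(s_1,\dots,s_k)$ is the $k$-th Newton polynomial $t_1^k+\dots+t_k^k$ written as an integer polynomial in the elementary symmetric functions $s_1,\dots,s_k$ of $t_1,\dots,t_k$, and a monomial $s_{a_1}\cdots s_{a_r}$ is interpreted as the class of $\Lambda^{a_1}M\otimes\cdots\otimes\Lambda^{a_r}M$. *)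

From HB Require Import structures.
From mathcomp Require Import all_boot all_algebra all_fingroup.
From mathcomp Require Import mpoly.

Set Implicit Arguments.
Unset Strict Implicit.
Unset Printing Implicit Defensive.
Import GRing.Theory.
Local Open Scope ring_scope.

(* Newton polynomial N_k in Z[s_1,..,s_k]: variable 'X_i stands for   *)
(* s_(i+1).  N_k is the (unique) polynomial with                      *)
(*   N_k(e_1(t),...,e_k(t)) = t_1^k + ... + t_k^k,                     *)
(* obtained via the fundamental theorem of symmetric polynomials      *)
Definition power_sum (k : nat) : {mpoly int[k]} := \sum_(i < k) 'X_i ^+ k.
Definition newton_poly (k : nat) : {mpoly int[k]} := symf (power_sum k).

(* Modules over the twisted group ring R#G that are free of finite    *)
(* rank over R.  Such a module is R^(idx) (column vectors indexed by  *)
(* a finite type), with G acting semilinearly by                      *)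
(*      g . v  =  smat g *m (act g applied entrywise to v).           *)
Section SRep.
Variables (gT : finGroupType) (R : comPzRingType).

Record srep := SRep { sidx : finType; smat : gT -> sidx -> sidx -> R }.
Arguments smat : clear implicits.

Definition srep_zero : srep := @SRep void (fun _ _ _ => 0).
Definition srep_unit : srep := @SRep unit (fun _ _ _ => 1).
(* the left regular module R#G : R-basis G, g.(r d) = g(r) (g d) *)
Definition srep_RG : srep := @SRep gT (fun g d e => ((d == (g * e)%g) : nat)%:R).

Definition srep_sum (V W : srep) : srep :=
  @SRep (sidx V + sidx W)%type
    (fun g i j => match i, j with
                  | inl a, inl b => smat V g a b
                  | inr a, inr b => smat W g a b
                  | _, _ => 0 end).
Definition srep_copies (c : nat) (V : srep) : srep :=
  @SRep ('I_c * sidx V)%type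
    (fun g i j => ((i.1 == j.1) : nat)%:R * smat V g i.2 j.2).
Definition srep_tens (V W : srep) : srep :=
  @SRep (sidx V * sidx W)%type
    (fun g i j => smat V g i.1 j.1 * smat W g i.2 j.2).

(* exterior power over R: basis e_J (J an a-subset, wedge taken in the *)
(* order given by enum_rank); the matrix of Lambda^a(A) has entries    *)
(* the a x a minors det(A_{I,J}) (Leibniz formula).                    *)
Definition ltI (T : finType) (x y : T) : bool := (enum_rank x < enum_rank y)%N.
Definition minor (T : finType) (A : T -> T -> R) (I J : {set T}) : R :=
  \sum_(f : {ffun T -> T} | [&& f @: J == I, #|f @: J| == #|J|
                              & [forall x, (x \notin J) ==> (f x == x)]])
     (-1) ^+ #|[set p : T * T | [&& p.1 \in J, p.2 \in J, ltI p.1 p.2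
                                  & ltI (f p.2) (f p.1)]]|
     * \prod_(j in J) A (f j) j.
Definition srep_ext (a : nat) (V : srep) : srep :=
  @SRep {S : {set sidx V} | #|S| == a}
    (fun g I J => minor (smat V g) (val I) (val J)).

Fixpoint srep_tpow (V : srep) (e : nat) : srep :=
  if e is e'.+1 then srep_tens V (srep_tpow V e') else srep_unit.

(* the module interpreting the monomial  prod_i s_(i+1)^(m i) :       *)
(*   (x)_i (Lambda^(i+1) V)^{(x) (m i)}                                *)
Definition srep_mon (k : nat) (m : 'X_{1..k}) (V : srep) : srep :=
  foldr (fun (i : 'I_k) acc => srep_tens (srep_tpow (srep_ext i.+1 V) (m i)) acc)
        srep_unit (enum 'I_k).

(* psi^k[V] = [adams_pos k V] - [adams_neg k V] in K_0 *)
Definition adams_pos (k : nat) (V : srep) : srep :=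
  foldr (fun m acc =>
           srep_sum (srep_copies `|(newton_poly k)@_m|%N (srep_mon m V)) acc)
        srep_zero [seq m <- msupp (newton_poly k) | 0 < (newton_poly k)@_m].
Definition adams_neg (k : nat) (V : srep) : srep :=
  foldr (fun m acc =>
           srep_sum (srep_copies `|(newton_poly k)@_m|%N (srep_mon m V)) acc)
        srep_zero [seq m <- msupp (newton_poly k) | (newton_poly k)@_m < 0].

(* isomorphism of R#G-modules: an R-linear bijection (matrix P with    *)
(* inverse Q) commuting with the semilinear G-actions:                 *)
(*   P (A_g g(v)) = B_g g(P v)  for all v,  i.e.  P A_g = B_g g(P).    *)
Definition srep_iso (act : gT -> R -> R) (V W : srep) : Prop :=
  exists (P : sidx W -> sidx V -> R) (Q : sidx V -> sidx W -> R),
    [/\ forall v v', \sum_w Q v w * P w v' = ((v == v') : nat)%:R,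
        forall w w', \sum_v P w v * Q v w' = ((w == w') : nat)%:R
      & forall g w v, \sum_t P w t * smat V g t v
                      = \sum_u smat W g w u * act g (P u v)].

End SRep.

(* In the standard R-bases, G acts on R#G, and hence on every sum, tensor
   product and exterior power built from it, by signed permutation matrices;
   on an exterior power the sign is that of the permutation of the wedge
   factors.  A basis vector of (x)_i Lambda^(a_i)(R#G) is a family of
   a_i-subsets of G, and if g fixes it then <g> acts freely on each subset,
   so #[g] divides every a_i and hence their sum.  Every monomial of N_k has
   weight k, which is prime to |G|, so on both sides G permutes a basis
   freely up to sign.  Two such modules of equal R-rank are isomorphic: match
   the orbits and untwist the signs along each orbit.  So no free summand is
   needed (m = 0) and only the ranks remain.  With n = |G| the two ranks are
   the positive and negative parts of N_k(C(n,1), ..., C(n,k)), which equals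
   n: as a polynomial in n it has degree at most k, and for n <= k it is the
   power sum p_k at (1,...,1,0,...,0), where e_i takes the value C(n,i).
   The isomorphism has entries in {0, 1, -1}, fixed by every ring
   endomorphism, so act1 and actM are not needed. *)

From HB Require Import structures.
From mathcomp Require Import all_boot all_algebra all_fingroup.
From mathcomp Require Import mpoly.
Set Implicit Arguments.
Unset Strict Implicit.
Unset Printing Implicit Defensive.
Import GRing.Theory Num.Theory.
Local Open Scope ring_scope.

Section NewtonAtBinomials.
Variable k : nat.
Hypothesis k_gt0 : (0 < k)%N.
Local Notation N := (newton_poly k).

Lemma power_sum_sym : power_sum k \is symmetric.
Proof.
apply/issymP => s; rewrite /power_sum raddf_sum /=.
have msymXU i : msym s ('X_i : {mpoly int[k]}) = 'X_(s i).
  rewrite msymX; congr mpolyX; apply/mnmP => j; rewrite !mnmE.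
  by rewrite eq_sym -(inj_eq (@perm_inj _ s)) permKV eq_sym.
under eq_bigr do rewrite rmorphXn /= msymXU.
by rewrite [RHS](reindex_inj (@perm_inj _ s)).
Qed.

Lemma power_sum_homog : power_sum k \is k.-homog.
Proof.
apply: rpred_sum => i _; have := @dhomogMn k int mdeg 1 'X_i k.
by rewrite mul1n; apply; rewrite dhomogX /= mdeg1.
Qed.

Lemma newton_polyE : N \mPo [tuple mesym k int i.+1 | i < k] = power_sum k.
Proof. by rewrite /newton_poly -symfP // power_sum_sym. Qed.

Lemma mnmwgt_newton_poly m : m \in msupp N -> mnmwgt m = k.
Proof.
apply: dhomog_mf.
by rewrite mwmwgt_homogE newton_polyE power_sum_homog.
Qed.

Definition binom_prod (n : nat) (m : 'X_{1..k}) : nat :=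
  \prod_(i < k) 'C(n, i.+1) ^ m i.

Definition indicator_lt (j : nat) (l : 'I_k) : int := (l < j)%N%:R.

Lemma card_ord_lt j : (j <= k)%N -> #|[set l : 'I_k | (l < j)%N]| = j.
Proof.
move=> jk; have wi : injective (widen_ord jk) by move=> a b /(congr1 val) /= /ord_inj.
rewrite -[RHS](card_ord j) -(card_imset _ wi).
apply: eq_card => l; rewrite inE; apply/idP/imsetP => [lj|[l' _ ->]] //=.
by exists (Ordinal lj) => //; apply: val_inj.
Qed.

Lemma mesym_indicator_lt j d : (j <= k)%N ->
  (mesym k int d).@[indicator_lt j] = 'C(j, d)%:R.
Proof.
move=> jk; rewrite mesymE raddf_sum /= -[X in 'C(X, d)](card_ord_lt jk).
rewrite -cards_draws -sumr_const big_mkcond [RHS]big_mkcond /=.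
apply: eq_bigr => h _; rewrite mevalX inE andbC; case: (#|h| == d) => //=.
case: (boolP (h \subset _)) => [/subsetP hs|/subsetPn [l lh]].
  apply: big1 => l _; rewrite mnmE /indicator_lt.
  by case: (boolP (l \in h)) => // /hs; rewrite inE => ->.
rewrite inE (bigD1 l) //= mnmE lh /indicator_lt => /negbTE ->.
by rewrite mul0r.
Qed.

Lemma newton_binomial_small j : (j <= k)%N ->
  \sum_(m <- msupp N) N@_m * (binom_prod j m)%:R = j%:R.
Proof.
move=> jk; transitivity ((N \mPo [tuple mesym k int i.+1 | i < k]).@[indicator_lt j]).
  rewrite comp_mpoly_meval mevalE; apply: eq_bigr => m _; congr (_ * _).
  rewrite natr_prod; apply: eq_bigr => i _.
  by rewrite tnth_mktuple mesym_indicator_lt // natrX.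
rewrite newton_polyE raddf_sum /= -[in RHS](card_ord_lt jk) -sumr_const [RHS]big_mkcond.
apply: eq_bigr => i _; rewrite rmorphXn /= mevalXU /indicator_lt inE.
by case: (i < j)%N; rewrite ?expr1n // expr0n /= eqn0Ngt k_gt0.
Qed.

Definition binom_poly (d : nat) : {poly rat} :=
  (d`!%:R)^-1 *: \prod_(l < d) ('X - l%:R%:P).

Lemma binom_polyE d n : (binom_poly d).[n%:R] = 'C(n, d)%:R.
Proof.
rewrite hornerZ horner_prod (eq_bigr (fun l : 'I_d => n%:R - l%:R)); last first.
  by move=> l _; rewrite hornerXsubC.
have -> : \prod_(l < d) (n%:R - l%:R : rat) = (n ^_ d)%:R.
  elim: d => [|d IH]; first by rewrite big_ord0 ffactn0.
  rewrite big_ord_recr /= IH ffactnSr natrM.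
  by case: (leqP d n) => dn; [rewrite natrB | rewrite (ffact_small dn) !mul0r].
rewrite -bin_ffact natrM mulrC -mulrA mulfV ?mulr1 //.
by rewrite pnatr_eq0 -lt0n fact_gt0.
Qed.

Lemma size_binom_poly d : (size (binom_poly d) <= d.+1)%N.
Proof.
apply: leq_trans (size_scale_leq _ _) _.
by rewrite size_prod_XsubC /index_enum -enumT size_enum_ord.
Qed.

Definition newton_binom_poly : {poly rat} :=
  \sum_(m <- msupp N) (N@_m)%:~R *: \prod_(i < k) binom_poly i.+1 ^+ m i.

Lemma newton_binom_poly_nat n :
  newton_binom_poly.[n%:R] = (\sum_(m <- msupp N) N@_m * (binom_prod n m)%:R)%:~R.
Proof.
rewrite horner_sum rmorph_sum; apply: eq_bigr => m _.
rewrite hornerZ horner_prod rmorphM /= rmorph_nat natr_prod; congr (_ * _).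
by apply: eq_bigr => i _; rewrite horner_exp binom_polyE natrX.
Qed.

Lemma size_newton_binom_poly : (size newton_binom_poly <= k.+1)%N.
Proof.
rewrite (leq_trans (size_sum _ _ _)) //.
apply/bigmax_leqP_seq => m /mnmwgt_newton_poly wm _.
apply: leq_trans (size_scale_leq _ _) _.
apply: leq_trans (size_poly_prod_leq _ _) _.
have size_factor (i : 'I_k) : (size (binom_poly i.+1 ^+ m i) <= (m i * i.+1).+1)%N.
  apply: leq_trans (size_poly_exp_leq _ _) _; rewrite ltnS [X in (_ <= X)%N]mulnC.
  by rewrite leq_mul2r -subn1 leq_subLR add1n size_binom_poly orbT.
rewrite card_ord leq_subLR addnS ltnS.
apply: (@leq_trans (\sum_(i < k) (m i * i.+1).+1)); first exact: leq_sum.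
rewrite (eq_bigr (fun i : 'I_k => m i * i.+1 + 1)%N) => [|i _]; last by rewrite addn1.
by rewrite big_split /= sum_nat_const card_ord muln1 -/(mnmwgt m) wm.
Qed.

Lemma newton_binom_polyE : newton_binom_poly = 'X.
Proof.
apply/eqP; rewrite -subr_eq0; apply/eqP.
apply: (@roots_geq_poly_eq0 _ _ [seq (j%:R : rat) | j <- iota 0 k.+1]).
- apply/allP => x /mapP [j]; rewrite mem_iota add0n ltnS => jk ->.
  rewrite /root hornerD hornerN hornerX newton_binom_poly_nat.
  by rewrite newton_binomial_small // rmorph_nat subrr.
- by rewrite map_inj_uniq ?iota_uniq // => a b /eqP; rewrite eqr_nat => /eqP.
- rewrite size_map size_iota (leq_trans (size_polyD _ _)) //.
  by rewrite geq_max size_newton_binom_poly size_polyN size_polyX ltnS.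
Qed.

Lemma newton_binomial n :
  \sum_(m <- msupp N) N@_m * (binom_prod n m)%:R = n%:R.
Proof.
apply: (@intr_inj rat); rewrite -newton_binom_poly_nat newton_binom_polyE.
by rewrite hornerX rmorph_nat.
Qed.

Lemma newton_binomial_balance n :
  (\sum_(m <- msupp N | (0 < N@_m)%R) `|N@_m| * binom_prod n m =
   \sum_(m <- msupp N | (N@_m < 0)%R) `|N@_m| * binom_prod n m + n)%N.
Proof.
apply/eqP; rewrite -(eqr_nat int) natrD !natr_sum; apply/eqP.
rewrite -(newton_binomial n) [X in _ = _ + X](bigID (fun m => 0 < N@_m)) /=.
have -> : \sum_(m <- msupp N | N@_m < 0) (`|N@_m| * binom_prod n m)%N%:R =
          - \sum_(m <- msupp N | ~~ (0 < N@_m)) N@_m * (binom_prod n m)%:R.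
  rewrite -sumrN big_seq_cond [RHS]big_seq_cond; apply: eq_big => m.
    by rewrite mcoeff_msupp; case: ltrgtP.
  by case/andP => _ neg; rewrite natrM natr_absz intz ltr0_norm // mulNr.
rewrite addrCA addNr addr0; apply: eq_bigr => m pos.
by rewrite natrM natr_absz intz gtr0_norm.
Qed.

End NewtonAtBinomials.

Lemma odd_card_addb (T : finType) (A B : {set T}) :
  odd #|[set x | (x \in A) (+) (x \in B)]| = odd #|A| (+) odd #|B|.
Proof.
rewrite -oddD -cardsUI -(cardsID (A :&: B) (A :|: B)).
have -> : (A :|: B) :&: (A :&: B) = A :&: B.
  by apply/setIidPr; apply: subset_trans (subsetIl _ _) (subsetUl _ _).
have -> : (A :|: B) :\: (A :&: B) = [set x | (x \in A) (+) (x \in B)].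
  by apply/setP => x; rewrite !inE; case: (x \in A); case: (x \in B).
by rewrite addnC addnA addnn oddD odd_double.
Qed.

Section Inversions.
Variable T : finType.
Implicit Types (x y : T) (s t : T -> T) (J : {set T}).

Lemma ltIxx x : ltI x x = false.
Proof. by rewrite /ltI ltnn. Qed.

Lemma ltI_neq x y : ltI x y -> x != y.
Proof. by apply: contraTneq => ->; rewrite ltIxx. Qed.

Lemma ltI_asym x y : ltI x y -> ltI y x = false.
Proof. by rewrite /ltI => /ltnW; rewrite leqNgt => /negbTE. Qed.

Lemma ltI_swap x y : x != y -> ltI y x = ~~ ltI x y.
Proof.
move=> nxy; rewrite /ltI; case: ltngtP => // /val_inj /enum_rank_inj exy.
by rewrite exy eqxx in nxy.
Qed.

Definition inversions s J :=
  [set p : T * T | [&& p.1 \in J, p.2 \in J, ltI p.1 p.2 & ltI (s p.2) (s p.1)]].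

Definition inversions_after s t J :=
  [set p : T * T | [&& p.1 \in J, p.2 \in J, ltI p.1 p.2 &
                      ltI (s p.1) (s p.2) != ltI (t (s p.1)) (t (s p.2))]].

Section Composition.
Variables (s t : T -> T) (J : {set T}).
Hypotheses (s_inj : injective s) (t_inj : injective t).

Lemma inversions_comp : inversions (t \o s) J =
  [set p | (p \in inversions s J) (+) (p \in inversions_after s t J)].
Proof.
apply/setP => [[x y]]; rewrite !inE /=.
case: (x \in J) (y \in J) => [] [] //=; case: (boolP (ltI x y)) => //= lxy.
have nsxy : s x != s y by rewrite (inj_eq s_inj) ltI_neq.
have ntxy : t (s x) != t (s y) by rewrite (inj_eq t_inj).
rewrite (ltI_swap nsxy) (ltI_swap ntxy).
by case: (ltI (s x) (s y)); case: (ltI (t (s x)) (t (s y))).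
Qed.

Lemma card_inversions_imset :
  #|inversions t (s @: J)| = #|inversions_after s t J|.
Proof.
pose sort2 p := if ltI (s p.1) (s p.2) then (s p.1, s p.2) else (s p.2, s p.1).
have sort2_inj : {in inversions_after s t J &, injective sort2}.
  move=> [x y] [x' y']; rewrite !inE /= => /and4P [_ _ l1 _] /and4P [_ _ l2 _].
  rewrite /sort2 /=; case: (ltI (s x) (s y)); case: (ltI (s x') (s y'));
    by case=> /s_inj e1 /s_inj e2; subst; rewrite ?(ltI_asym l2) in l1.
rewrite -(card_in_imset sort2_inj); apply: eq_card => -[u1 u2].
rewrite inE /=; apply/idP/imsetP.
- case/and4P => /imsetP [x xJ ->] /imsetP [y yJ ->] lu tu.
  have nxy : x != y by apply: contraTneq lu => ->; rewrite ltIxx.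
  have ntxy : t (s x) != t (s y) by rewrite !(inj_eq t_inj) (inj_eq s_inj).
  case: (boolP (ltI x y)) => lxy.
  + by exists (x, y); rewrite /sort2 /= ?lu // inE /= xJ yJ lxy lu (ltI_asym tu).
  + exists (y, x); rewrite /sort2 /= ?(ltI_asym lu) //.
    by rewrite inE /= xJ yJ (ltI_swap nxy) lxy (ltI_asym lu) tu.
- case=> [[x y]]; rewrite inE /= => /and4P [xJ yJ lxy hC].
  have nsxy : s x != s y by rewrite (inj_eq s_inj) ltI_neq.
  have ntxy : t (s x) != t (s y) by rewrite (inj_eq t_inj).
  rewrite /sort2 /=; case: (boolP (ltI (s x) (s y))) => ls [-> ->] /=;
    rewrite ?imset_f //=; move: hC.
  + by rewrite ls /= (ltI_swap ntxy); case: (ltI (t (s x)) (t (s y))).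
  + rewrite (ltI_swap nsxy) ls (negbTE ls) /=.
    by case: (ltI (t (s x)) (t (s y))).
Qed.

Lemma odd_inversions_comp :
  odd #|inversions (t \o s) J| = odd #|inversions t (s @: J)| (+) odd #|inversions s J|.
Proof. by rewrite inversions_comp odd_card_addb card_inversions_imset addbC. Qed.

End Composition.
End Inversions.

Section SignedPermMinor.
Variables (R : comPzRingType) (T : finType).

Lemma prod_sign_card (J : {set T}) (b : T -> bool) :
  \prod_(j in J) ((-1) ^+ b j : R) = (-1) ^+ (odd #|[set x in J | b x]|).
Proof.
rewrite signr_odd -(big_morph _ (exprD (-1 : R)) (expr0 _)) -sum1_card.
rewrite big_mkcond [in RHS]big_mkcond /=; congr (_ ^+ _); apply: eq_bigr => x _.
by rewrite !inE; case: (x \in J); case: (b x).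
Qed.

Lemma minor_signed_perm (A : T -> T -> R) (s : T -> T) (b : T -> bool) (I J : {set T}) :
  injective s -> (forall y x, A y x = (-1) ^+ b x * (y == s x)%:R) ->
  minor A I J =
  (s @: J == I)%:R * (-1) ^+ (odd #|inversions s J| (+) odd #|[set x in J | b x]|).
Proof.
move=> s_inj AE; rewrite /minor; set f0 := [ffun x => if x \in J then s x else x].
have f0J : f0 @: J = s @: J by apply: eq_in_imset => x xJ; rewrite ffunE xJ.
have f0_id : [forall x, (x \notin J) ==> (f0 x == x)].
  by apply/forallP => x; apply/implyP => xJ; rewrite ffunE (negbTE xJ).
have vanish (f : {ffun T -> T}) : [forall x, (x \notin J) ==> (f x == x)] ->
    f != f0 -> \prod_(j in J) A (f j) j = 0.
  move=> /forallP fJ nf; have [j jJ fj] : exists2 j, j \in J & f j != s j.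
    apply/exists_inP; apply: contraR nf => /exists_inPn H; apply/eqP/ffunP => x.
    rewrite ffunE; case: ifP => xJ; first exact/eqP/(negbNE (H x xJ)).
    by move: (fJ x); rewrite xJ => /eqP.
  by rewrite (bigD1 j) //= AE (negbTE fj) mulr0 mul0r.
case: (eqVneq (s @: J) I) => [<-|nI] /=; last first.
  rewrite mul0r big1 // => f /and3P [/eqP fI _ cf].
  have nf : f != f0 by apply: contra_neq nI => ef; rewrite -f0J -ef fI.
  by rewrite vanish // mulr0.
rewrite mul1r (bigD1 f0) /=; last by rewrite f0J eqxx card_imset // eqxx f0_id.
rewrite [X in _ + X]big1 ?addr0 => [|f /andP [/and3P [_ _ cf] nf]]; last first.
  by rewrite vanish // mulr0.
rewrite signr_addb -prod_sign_card; congr (_ * _).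
  rewrite -signr_odd; congr ((-1) ^+ (odd _)); apply: eq_card => p.
  by rewrite !inE !ffunE; case: (p.1 \in J); case: (p.2 \in J).
by apply: eq_bigr => j jJ; rewrite AE ffunE jJ eqxx mulr1.
Qed.

End SignedPermMinor.

Section FreeAction.
Variables (gT : finGroupType) (T : finType) (a : gT -> T -> T).
Hypotheses (a1 : forall x, a 1%g x = x)
  (aM : forall g h x, a (g * h)%g x = a g (a h x))
  (a_free : forall g x, a g x = x -> g = 1%g).

Definition orbit_of x := [set a g x | g : gT].
Definition orbit_rep x := odflt x [pick y in orbit_of x].
Definition orbit_shift x := odflt 1%g [pick g | a g (orbit_rep x) == x].
Definition orbit_reps := [set x | orbit_rep x == x].

Lemma act_injl x : injective (a^~ x).
Proof.
move=> g h ghx; have : a (h^-1 * g)%g x = x by rewrite aM ghx -aM mulVg a1.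
by move/a_free => hg1; apply/eqP; rewrite eq_sym eq_mulVg1 hg1.
Qed.

Lemma orbit_of_act h x : orbit_of (a h x) = orbit_of x.
Proof.
apply/setP => y; apply/imsetP/imsetP => [[g _ ->]|[g _ ->]].
  by exists (g * h)%g; rewrite ?inE // aM.
by exists (g * h^-1)%g; rewrite ?inE // aM -(aM h^-1 h) mulVg a1.
Qed.

Lemma orbit_of_id x : x \in orbit_of x.
Proof. by apply/imsetP; exists 1%g; rewrite ?inE ?a1. Qed.

Lemma orbit_rep_act h x : orbit_rep (a h x) = orbit_rep x.
Proof. by rewrite /orbit_rep orbit_of_act; case: pickP => // /(_ x); rewrite orbit_of_id. Qed.

Lemma orbit_shiftK x : a (orbit_shift x) (orbit_rep x) = x.
Proof.
rewrite /orbit_shift; case: pickP => [g /eqP // | no_shift].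
have /imsetP [g _ xg] : orbit_rep x \in orbit_of x.
  by rewrite /orbit_rep; case: pickP => [y // | /(_ x)]; rewrite orbit_of_id.
by have := no_shift g^-1%g; rewrite xg -aM mulVg a1 eqxx.
Qed.

Lemma orbit_shift_act h x : orbit_shift (a h x) = (h * orbit_shift x)%g.
Proof.
by apply: (@act_injl (orbit_rep x)); rewrite aM orbit_shiftK -(orbit_rep_act h) orbit_shiftK.
Qed.

Lemma orbit_rep_in x : orbit_rep x \in orbit_reps.
Proof. by rewrite inE -{2}(orbit_shiftK x) orbit_rep_act. Qed.

Lemma card_free_action : #|T| = (#|gT| * #|orbit_reps|)%N.
Proof.
have coord_inj : injective (fun x => (orbit_shift x, orbit_rep x)).
  by move=> x y [sxy rxy]; rewrite -(orbit_shiftK x) -(orbit_shiftK y) sxy rxy.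
rewrite -cardsT -(card_imset _ coord_inj) -(cardsT gT) -cardsX.
apply: eq_card => -[g r]; rewrite !inE /=; apply/imsetP/idP => [[x _ [_ ->]]|].
  by have := orbit_rep_in x; rewrite inE.
move=> /eqP rr; exists (a g r); rewrite ?inE // orbit_rep_act rr.
have shift_r : orbit_shift r = 1%g.
  by apply: (@act_injl r); rewrite a1 -{2}rr orbit_shiftK.
by rewrite orbit_shift_act shift_r mulg1.
Qed.

Lemma free_cocycle_coboundary (c : gT -> T -> bool) :
  (forall g h x, c (g * h)%g x = c g (a h x) (+) c h x) ->
  exists sg : T -> bool, forall g x, sg (a g x) = sg x (+) c g x.
Proof.
move=> cM; exists (fun x => c (orbit_shift x) (orbit_rep x)) => g x.
by rewrite orbit_shift_act orbit_rep_act cM orbit_shiftK addbC.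
Qed.

End FreeAction.

Lemma eq_card_bij (A B : finType) : #|A| = #|B| -> exists f : A -> B, bijective f.
Proof.
move=> AB; exists (fun x => enum_val (cast_ord AB (enum_rank x))).
exists (fun y => enum_val (cast_ord (esym AB) (enum_rank y))) => [x|y];
  by rewrite enum_valK ?cast_ordK ?cast_ordKV enum_rankK.
Qed.

Section FreeActionEquiv.
Variables (gT : finGroupType) (T U : finType) (a : gT -> T -> T) (b : gT -> U -> U).
Hypotheses (a1 : forall x, a 1%g x = x) (aM : forall g h x, a (g * h)%g x = a g (a h x))
  (a_free : forall g x, a g x = x -> g = 1%g).
Hypotheses (b1 : forall y, b 1%g y = y) (bM : forall g h y, b (g * h)%g y = b g (b h y))
  (b_free : forall g y, b g y = y -> g = 1%g).

Lemma free_action_equiv : #|T| = #|U| ->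
  exists phi : T -> U, bijective phi /\ forall g x, phi (a g x) = b g (phi x).
Proof.
move=> TU; pose RT := {x | x \in orbit_reps a}; pose RU := {y | y \in orbit_reps b}.
have [f f_bij] : exists f : RT -> RU, bijective f.
  apply: eq_card_bij; rewrite !card_sig; apply/eqP.
  rewrite -(@eqn_pmul2l #|gT|); last by apply/card_gt0P; exists 1%g.
  by rewrite -card_free_action // -card_free_action // TU.
pose rep_sub x : RT := exist _ (orbit_rep a x) (orbit_rep_in a1 aM x).
have rep_sub_act g x : rep_sub (a g x) = rep_sub x.
  by apply: val_inj; rewrite /= orbit_rep_act.
pose phi x := b (orbit_shift a x) (val (f (rep_sub x))).
have phi_act g x : phi (a g x) = b g (phi x).
  by rewrite /phi orbit_shift_act // rep_sub_act bM.
have rep_phi x : orbit_rep b (phi x) = val (f (rep_sub x)).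
  by rewrite orbit_rep_act //; apply/eqP; have := valP (f (rep_sub x)); rewrite inE.
exists phi; split => //; apply: inj_card_bij; last by rewrite TU.
move=> x x' phixx'.
have rxx' : rep_sub x = rep_sub x'.
  by apply: (bij_inj f_bij); apply: val_inj; rewrite -!rep_phi phixx'.
have sxx' : orbit_shift a x = orbit_shift a x'.
  by move: phixx'; rewrite /phi rxx' => /(act_injl b1 bM b_free).
have /(congr1 val) /= rep_xx' := rxx'.
by rewrite -(orbit_shiftK a1 aM x) -(orbit_shiftK a1 aM x') sxx' rep_xx'.
Qed.

End FreeActionEquiv.

Lemma order_dvdn_card_stable (gT : finGroupType) (g : gT) (S : {set gT}) :
  (forall x, x \in S -> (g * x)%g \in S) -> (#[g]%g %| #|S|)%N.
Proof.
move=> gS; have cycS : (<[g]> * S)%g \subset S.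
  apply/subsetP => _ /mulsgP [_ x /cycleP [i ->] xS ->].
  by elim: i => [|i IH]; rewrite ?expg0 ?mul1g // expgS -mulgA gS.
have block_coset x : x \in S ->
    [set y in S | rcoset <[g]> x == rcoset <[g]> y] = (<[g]> :* x)%g.
  move=> xS; apply/setP => y; rewrite inE !rcosetE (sameP eqP rcoset_eqP).
  rewrite rcoset_sym; apply/andb_idl => /rcosetP [c cg ->].
  by apply: (subsetP cycS); apply: mem_mulg.
rewrite (card_uniform_partition (n := #[g]%g) _ (preim_partitionP (rcoset <[g]>) S)).
  exact: dvdn_mull.
by move=> _ /imsetP [x xS ->]; rewrite block_coset // card_rcoset.
Qed.

Section SignedPerm.
Variables (gT : finGroupType) (R : comPzRingType).
Local Notation srep := (srep gT R).
Local Notation RG := (srep_RG gT R).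

Definition signed_perm (V : srep) (a : gT -> sidx V -> sidx V) (e : gT -> sidx V -> bool) :=
  [/\ forall x, a 1%g x = x,
      forall g h x, a (g * h)%g x = a g (a h x),
      forall g h x, e (g * h)%g x = e g (a h x) (+) e h x
    & forall g y x, smat g y x = (-1) ^+ e g x * (y == a g x)%:R].
Arguments signed_perm : clear implicits.

Definition signed_perm_dvd (V : srep) (d : nat) :=
  exists a e, signed_perm V a e /\ forall g x, a g x = x -> (#[g]%g %| d)%N.

Lemma signed_perm_inj (V : srep) a e : signed_perm V a e -> forall g, injective (a g).
Proof. by case=> a1 aM _ _ g x y H; rewrite -(a1 x) -(a1 y) -(mulVg g) !aM H. Qed.
Arguments signed_perm_inj {V a e} Vsp g.

Lemma signed_perm_RG : signed_perm RG (fun g x => (g * x)%g) (fun _ _ => false).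
Proof.
split => //= [x | g h x | g y x]; [exact: mul1g | by rewrite mulgA |].
by rewrite expr0 mul1r.
Qed.

Lemma signed_perm_dvd_RG d : signed_perm_dvd RG d.
Proof.
exists (fun g x => (g * x)%g), (fun _ _ => false); split; first exact: signed_perm_RG.
move=> g x /eqP; rewrite -{2}(mul1g x) (can_eq (mulgK x)) => /eqP ->.
by rewrite order1 dvd1n.
Qed.

Lemma signed_perm_dvd_zero d : signed_perm_dvd (srep_zero gT R) d.
Proof. by exists (fun _ x => x), (fun _ _ => false); split; [split|] => // ? []. Qed.

Lemma signed_perm_dvd_unit : signed_perm_dvd (srep_unit gT R) 0.
Proof.
exists (fun _ x => x), (fun _ _ => false); split=> [|g x _]; last exact: dvdn0.
by split=> // g [] []; rewrite /= expr0 mul1r.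
Qed.

Lemma signed_perm_dvd_sum V W d :
  signed_perm_dvd V d -> signed_perm_dvd W d -> signed_perm_dvd (srep_sum V W) d.
Proof.
move=> [a [e [[a1 aM eM sV] dV]]] [b [f [[b1 bM fM sW] dW]]].
exists (fun g x => match x with inl y => inl (a g y) | inr y => inr (b g y) end).
exists (fun g x => match x with inl y => e g y | inr y => f g y end).
split; first split.
- by case=> y; rewrite ?a1 ?b1.
- by move=> g h [] y; rewrite ?aM ?bM.
- by move=> g h [] y; rewrite ?eM ?fM.
- by move=> g [] y [] x //=; rewrite ?sV ?sW ?mulr0.
by move=> g [] y [] /=; [apply: dV | apply: dW].
Qed.

Lemma signed_perm_dvd_copies c V d :
  signed_perm_dvd V d -> signed_perm_dvd (srep_copies c V) d.
Proof.
move=> [a [e [[a1 aM eM sV] dV]]].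
exists (fun g x => (x.1, a g x.2)), (fun g x => e g x.2).
split; first split.
- by case=> i y /=; rewrite a1.
- by move=> g h [i y] /=; rewrite aM.
- by move=> g h [i y] /=; rewrite eM.
- move=> g [i y] [j x] /=; rewrite sV xpair_eqE /=.
  by case: (i == j); rewrite /= ?mul1r ?mul0r ?mulr0.
by move=> g [i y] [] /dV.
Qed.

Lemma signed_perm_dvd_tens V W d1 d2 : signed_perm_dvd V d1 -> signed_perm_dvd W d2 ->
  signed_perm_dvd (srep_tens V W) (d1 + d2).
Proof.
move=> [a [e [[a1 aM eM sV] dV]]] [b [f [[b1 bM fM sW] dW]]].
exists (fun g x => (a g x.1, b g x.2)), (fun g x => e g x.1 (+) f g x.2).
split; first split.
- by case=> y z /=; rewrite a1 b1.
- by move=> g h [y z] /=; rewrite aM bM.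
- by move=> g h [y z] /=; rewrite eM fM addbACA.
- move=> g [y z] [x w] /=; rewrite sV sW xpair_eqE /= signr_addb.
  by case: (y == _); case: (z == _); rewrite /= ?mulr1 ?mulr0 ?mul0r // mulrACA.
by move=> g [y z] [] /dV Hd /dW He; rewrite dvdn_add.
Qed.

Lemma signed_perm_dvd_tpow V d n :
  signed_perm_dvd V d -> signed_perm_dvd (srep_tpow V n) (d * n).
Proof.
move=> dV; elim: n => [|n IH] /=; first by rewrite muln0; apply: signed_perm_dvd_unit.
by rewrite mulnS; apply: signed_perm_dvd_tens.
Qed.

Section ExteriorPower.
Variables (V : srep) (a : gT -> sidx V -> sidx V) (e : gT -> sidx V -> bool) (n : nat).
Hypothesis Vsp : signed_perm V a e.
Local Notation I := (sidx (srep_ext n V)).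

Definition ext_act g (S : I) : I := insubd S (a g @: val S).

Definition ext_sign g (S : I) : bool :=
  odd #|inversions (a g) (val S)| (+) odd #|[set x in val S | e g x]|.

Lemma ext_act_val g S : val (ext_act g S) = a g @: val S.
Proof.
rewrite insubdK // -topredE /= card_imset ?(valP S) //.
exact: signed_perm_inj Vsp g.
Qed.

Lemma ext_sign_cocycle g h S :
  ext_sign (g * h)%g S = ext_sign g (ext_act h S) (+) ext_sign h S.
Proof.
case: (Vsp) => _ aM eM _; have a_inj := signed_perm_inj Vsp.
rewrite /ext_sign ext_act_val.
have -> : inversions (a (g * h)%g) (val S) = inversions (a g \o a h) (val S).
  by apply/setP => p; rewrite !inE /= !aM.
rewrite odd_inversions_comp; try exact: a_inj.
have -> : [set x in val S | e (g * h)%g x] =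
    [set x | (x \in [set x in val S | e g (a h x)]) (+) (x \in [set x in val S | e h x])].
  by apply/setP => x; rewrite !inE eM; case: (x \in val S).
rewrite odd_card_addb.
have -> : #|[set x in val S | e g (a h x)]| = #|[set x in a h @: val S | e g x]|.
  rewrite -(card_imset _ (a_inj h)); apply: eq_card => y; rewrite !inE.
  apply/imsetP/andP => [[x] | [/imsetP [x xS ->] ex]].
    by rewrite inE => /andP [xS ex] ->; rewrite imset_f.
  by exists x; rewrite // inE xS.
by rewrite -!addbA; congr addb; rewrite addbCA.
Qed.

Lemma signed_perm_ext : signed_perm (srep_ext n V) ext_act ext_sign.
Proof.
case: (Vsp) => a1 aM _ sV; split.
- move=> S; apply: val_inj; rewrite ext_act_val.
  by rewrite (eq_imset _ a1) imset_id.
- move=> g h S; apply: val_inj; rewrite !ext_act_val -imset_comp.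
  by apply: eq_imset => x; rewrite aM.
- exact: ext_sign_cocycle.
move=> g S1 S2 /=; rewrite (minor_signed_perm _ _ (signed_perm_inj Vsp g) (sV g)).
by rewrite -[S1 == _]val_eqE /= ext_act_val eq_sym mulrC.
Qed.

End ExteriorPower.

Lemma signed_perm_dvd_ext_RG n : signed_perm_dvd (srep_ext n RG) n.
Proof.
exists (@ext_act RG (fun g x => (g * x)%g) n).
exists (@ext_sign RG (fun g x => (g * x)%g) (fun _ _ => false) n).
split; first exact: signed_perm_ext signed_perm_RG.
move=> g S /(congr1 val); rewrite (ext_act_val signed_perm_RG) => gS.
rewrite -(eqP (valP S)); apply: order_dvdn_card_stable => x xS.
by rewrite -gS imset_f.
Qed.

Lemma signed_perm_dvd_mon k (m : 'X_{1..k}) : signed_perm_dvd (srep_mon m RG) (mnmwgt m).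
Proof.
rewrite /srep_mon /mnmwgt -big_enum /=; elim: (enum 'I_k) => [|i s IH] /=.
  by rewrite big_nil; apply: signed_perm_dvd_unit.
rewrite big_cons mulnC; apply: signed_perm_dvd_tens => //.
by apply: signed_perm_dvd_tpow; apply: signed_perm_dvd_ext_RG.
Qed.

Lemma card_ext n (V : srep) : #|sidx (srep_ext n V)| = 'C(#|sidx V|, n).
Proof. by rewrite card_sig -card_draws; apply: eq_card => S; rewrite !inE. Qed.

Lemma card_tpow (V : srep) n : #|sidx (srep_tpow V n)| = (#|sidx V| ^ n)%N.
Proof. by elim: n => [|n IH] /=; rewrite ?card_unit // card_prod IH expnS. Qed.

Lemma card_mon k (m : 'X_{1..k}) : #|sidx (srep_mon m RG)| = binom_prod #|gT| m.
Proof.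
rewrite /srep_mon /binom_prod -big_enum /=; elim: (enum 'I_k) => [|i s IH] /=.
  by rewrite big_nil card_unit.
by rewrite big_cons card_prod IH card_tpow card_ext.
Qed.

Section AdamsTerms.
Variables (k : nat) (s : seq 'X_{1..k}).
Local Notation adams_terms := (foldr (fun m acc =>
  srep_sum (srep_copies `|(newton_poly k)@_m|%N (srep_mon m RG)) acc) (srep_zero gT R) s).

Lemma signed_perm_dvd_adams_terms : {subset s <= msupp (newton_poly k)} ->
  signed_perm_dvd adams_terms k.
Proof.
elim: s => [|m s' IH] sN /=; first exact: signed_perm_dvd_zero.
apply: signed_perm_dvd_sum; last by apply: IH => m' ms; apply: sN; rewrite inE ms orbT.
apply: signed_perm_dvd_copies.
by have := signed_perm_dvd_mon m; rewrite mnmwgt_newton_poly ?sN ?mem_head.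
Qed.

Lemma card_adams_terms :
  #|sidx adams_terms| = (\sum_(m <- s) `|(newton_poly k)@_m| * binom_prod #|gT| m)%N.
Proof.
elim: s => [|m s' IH] /=; first by rewrite big_nil card_void.
by rewrite big_cons card_sum IH card_prod card_ord card_mon.
Qed.

End AdamsTerms.

Lemma signed_perm_dvd_adams_pos k : signed_perm_dvd (adams_pos k RG) k.
Proof. by apply: signed_perm_dvd_adams_terms => m; rewrite mem_filter => /andP []. Qed.

Lemma signed_perm_dvd_adams_neg k : signed_perm_dvd (adams_neg k RG) k.
Proof. by apply: signed_perm_dvd_adams_terms => m; rewrite mem_filter => /andP []. Qed.

Lemma card_adams_pos k : #|sidx (adams_pos k RG)| =
  (\sum_(m <- msupp (newton_poly k) | (0 < (newton_poly k)@_m)%R)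
     `|(newton_poly k)@_m| * binom_prod #|gT| m)%N.
Proof. by rewrite card_adams_terms big_filter. Qed.

Lemma card_adams_neg k : #|sidx (adams_neg k RG)| =
  (\sum_(m <- msupp (newton_poly k) | ((newton_poly k)@_m < 0)%R)
     `|(newton_poly k)@_m| * binom_prod #|gT| m)%N.
Proof. by rewrite card_adams_terms big_filter. Qed.

Section Isomorphism.
Variable act : gT -> {rmorphism R -> R}.

Lemma sum_delta (T : finType) (t0 : T) (F : T -> R) :
  \sum_t (t == t0)%:R * F t = F t0.
Proof. by rewrite (bigD1 t0) //= eqxx mul1r big1 ?addr0 // => t /negbTE ->; rewrite mul0r. Qed.

Lemma srep_iso_signed_perm V W a e b f (phi : sidx V -> sidx W) (sg : sidx V -> bool) :
  signed_perm V a e -> signed_perm W b f -> bijective phi ->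
  (forall g x, phi (a g x) = b g (phi x)) ->
  (forall g x, sg (a g x) = sg x (+) e g x (+) f g (phi x)) ->
  srep_iso (fun g => act g) V W.
Proof.
move=> [_ _ _ sV] [_ _ _ sW] [psi phiK psiK] phi_act sg_act.
have phi_eq w v : (w == phi v) = (v == psi w) by rewrite eq_sym (can2_eq phiK psiK).
exists (fun w x => (w == phi x)%:R * (-1) ^+ sg x), (fun x w => (w == phi x)%:R * (-1) ^+ sg x).
split => [v v' | w w' | g w v].
- under eq_bigr do rewrite -mulrA; rewrite sum_delta (inj_eq (can_inj phiK)).
  by case: eqVneq => [->|_]; rewrite ?mul1r -?signr_addb ?addbb // mul0r mulr0.
- under eq_bigr do rewrite phi_eq -mulrA; rewrite sum_delta psiK [w' == w]eq_sym.
  by rewrite mulrCA -signr_addb addbb mulr1.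
- under eq_bigr do rewrite sV mulrA mulrC.
  under [RHS]eq_bigr do rewrite sW rmorphM rmorph_sign rmorph_nat mulrC -!mulrA.
  rewrite !sum_delta phi_act sg_act !signr_addb.
  by case: (w == _); case: (e g v); case: (sg v); case: (f g _);
    rewrite /= ?(expr0, expr1, mulr1, mul1r, mulrN, mulNr, mulr0, mul0r, opprK, oppr0).
Qed.

Lemma srep_iso_free V W a e b f :
  signed_perm V a e -> signed_perm W b f ->
  (forall g x, a g x = x -> g = 1%g) -> (forall g y, b g y = y -> g = 1%g) ->
  #|sidx V| = #|sidx W| -> srep_iso (fun g => act g) V W.
Proof.
move=> Vsp Wsp a_free b_free VW; have [a1 aM eM _] := Vsp; have [b1 bM fM _] := Wsp.
have [phi [phi_bij phi_act]] := free_action_equiv a1 aM a_free b1 bM b_free VW.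
have [sg sg_act] : exists sg : sidx V -> bool,
    forall g x, sg (a g x) = sg x (+) (e g x (+) f g (phi x)).
  apply: free_cocycle_coboundary => // g h x.
  by rewrite eM fM phi_act addbACA.
by apply: (srep_iso_signed_perm (sg := sg) Vsp Wsp phi_bij phi_act) => g x; rewrite sg_act addbA.
Qed.

Lemma srep_iso_coprime V W d :
  signed_perm_dvd V d -> signed_perm_dvd W d -> coprime d #|gT| ->
  #|sidx V| = #|sidx W| -> srep_iso (fun g => act g) V W.
Proof.
move=> [a [e [Vsp dV]]] [b [f [Wsp dW]]] cop VW.
have order_trivial (g : gT) : (#[g]%g %| d)%N -> g = 1%g.
  move=> dg; apply/eqP; rewrite -order_eq1 -dvdn1 -(eqP cop) dvdn_gcd dg /=.
  by rewrite -cardsT; apply: cardSg; apply: subsetT.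
by apply: (srep_iso_free Vsp Wsp) => // g x; [move/dV | move/dW]; apply: order_trivial.
Qed.

End Isomorphism.

End SignedPerm.

Unset Implicit Arguments.

Theorem theorem1p6 (gT : finGroupType) (R : comPzRingType)
  (act : gT -> {rmorphism R -> R})
  (act1 : forall x : R, act 1%g x = x)
  (actM : forall (g h : gT) (x : R), act (g * h)%g x = act g (act h x))
  (k : nat) (k_gt0 : (0 < k)%N) (cop : coprime k #|gT|) :
  exists m : nat,
    srep_iso (fun g => act g)
      (srep_sum (adams_pos k (srep_RG gT R)) (srep_copies m (srep_RG gT R)))
      (srep_sum (srep_sum (adams_neg k (srep_RG gT R)) (srep_RG gT R))
                (srep_copies m (srep_RG gT R))).
Proof.
exists 0%N; apply: (srep_iso_coprime act _ _ cop).
- apply: signed_perm_dvd_sum; first exact: signed_perm_dvd_adams_pos.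
  by apply: signed_perm_dvd_copies; apply: signed_perm_dvd_RG.
- apply: signed_perm_dvd_sum; last first.
    by apply: signed_perm_dvd_copies; apply: signed_perm_dvd_RG.
  by apply: signed_perm_dvd_sum; [apply: signed_perm_dvd_adams_neg | apply: signed_perm_dvd_RG].
rewrite !card_sum card_adams_pos card_adams_neg !card_prod card_ord !mul0n !addn0.
exact: newton_binomial_balance.
Qed.
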